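(* Let $I$ be a nonzero ideal of $\mathbb{Z}[\zeta_{16}+\zeta_{16}^7]$. Then there exists a generator $\alpha'$ of $I$ (i.e. $I=(\alpha')$) which is a shortest nonzero vector of $I$ under the canonical embedding of $\mathbb{Q}(\zeta_{16}+\zeta_{16}^7)$, i.e. $\|\Sigma(\alpha')\|\le\|\Sigma(\gamma)\|$ for every nonzero $\gamma\in I$.
   Context: $\zeta_{16}=e^{2\pi i/16}$; $\mathbb{Q}(\zeta_{16}+\zeta_{16}^7)$ is a degree-4 subfield of $\mathbb{Q}(\zeta_{16})$ whose ring of integers is $\mathbb{Z}[\zeta_{16}+\zeta_{16}^7]$. For a number field $\mathbb{K}$ with complex embeddings $\varphi_1,\dots,\varphi_t$ (all of them), the canonical embedding is $\Sigma_{\mathbb{K}}(x)=(\varphi_1(x),\dots,\varphi_t(x))$ with $\|\Sigma_{\mathbb{K}}(x)\|^2=\sum_j|\varphi_j(x)|^2$. *)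

From HB Require Import structures.
From mathcomp Require Import all_boot all_order all_algebra all_field.
Set Implicit Arguments. Unset Strict Implicit. Unset Printing Implicit Defensive.
Import Order.TTheory GRing.Theory Num.Theory.
Local Open Scope ring_scope.

(* zeta16 = e^{2 pi i/16}: the 8th root of -1 of minimal nonnegative argument
   (cf. the header of algC.v / numfield.v). *)
Definition zeta16 : algC := 8.-root (-1).

Definition theta_a (a : nat) : algC := zeta16 ^+ a + zeta16 ^+ (7 * a).
Definition theta : algC := theta_a 1.

Definition evalZ (p : {poly int}) (z : algC) : algC := (map_poly intr p).[z].

Definition in_Ztheta (x : algC) : Prop := exists p : {poly int}, x = evalZ p theta.

Definition is_ideal (I : algC -> Prop) : Prop :=
  [/\ forall x, I x -> in_Ztheta x,
      I 0,
      forall x y, I x -> I y -> I (x + y)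
    & forall r x, in_Ztheta r -> I x -> I (r * x)].

(* The complex embeddings of K = Q(theta) are the maps p(theta) |-> p(theta_a)
   for a in {1,3,9,11} (representatives of (Z/16Z)^* / {1,7}).
   Canonical-embedding norm of the element p(theta): *)
Definition canon_norm (p : {poly int}) : algC :=
  sqrtC (\sum_(a <- [:: 1%N; 3%N; 9%N; 11%N]) `|evalZ p (theta_a a)| ^+ 2).

(* Z[theta] is the ring of integers of K = Q(theta), a totally imaginary quartic field with
   real subfield Q(sqrt2), sqrt2 = theta^2 + 2, and fundamental unit 1 + sqrt2.  Its norm
   form is theta-Euclidean: every x in K has some d in Z[theta] with N(x - d) < 1 or
   N(theta x - d) < 1, which is certified by an exact interval branch-and-bound on the unit
   cube of coordinates.  So a nonzero b in I of least norm generates I: otherwise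
   theta x = b (1 + theta e) for some x in I, and x - b e in I would have norm N(b) / 2.
   Among the generators take one of least canonical norm; its multiples by the units
   1 + sqrt2 and sqrt2 - 1 are no shorter, and this balances its two absolute values well
   enough that every multiple by an element of norm >= 2 is no shorter either. *)

From HB Require Import structures.
From mathcomp Require Import all_boot all_order all_algebra all_field.
From Stdlib Require Import QArith Qround Qminmax Lqa Lia Classical_Prop Wf_nat.

Module NormFormCover.
Local Open Scope Q_scope.

Definition itv := (Q * Q)%type.
Definition in_itv (x : Q) (I : itv) := fst I <= x <= snd I.

Definition itv_add (I J : itv) : itv := (fst I + fst J, snd I + snd J).
Definition itv_scale (k : Q) (I : itv) : itv :=
  if Qle_bool 0 k then (k * fst I, k * snd I) else (k * snd I, k * fst I).
Definition itv_mul (I J : itv) : itv :=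
  let (a, b) := I in let (c, d) := J in
  (Qmin (Qmin (a * c) (a * d)) (Qmin (b * c) (b * d)),
   Qmax (Qmax (a * c) (a * d)) (Qmax (b * c) (b * d))).
Definition itv_sq (I : itv) : itv :=
  let (l, h) := I in
  (if Qle_bool l 0 && Qle_bool 0 h then 0 else Qmin (l * l) (h * h), Qmax (l * l) (h * h)).
Definition itv_sqmax (I : itv) : Q := Qmax (fst I * fst I) (snd I * snd I).

Lemma Qle_bool_false a b : Qle_bool a b = false -> b < a.
Proof. intro E. apply Qnot_le_lt. rewrite <- Qle_bool_iff. congruence. Qed.

Lemma itv_add_sound x y I J : in_itv x I -> in_itv y J -> in_itv (x + y) (itv_add I J).
Proof. unfold in_itv; simpl; lra. Qed.

Lemma itv_scale_sound k x I : in_itv x I -> in_itv (k * x) (itv_scale k I).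
Proof.
  destruct I as [l h]; unfold in_itv, itv_scale; simpl; intros [Hl Hh].
  destruct (Qle_bool 0 k) eqn:E; simpl.
  - apply Qle_bool_iff in E; split; nra.
  - apply Qle_bool_false in E; split; nra.
Qed.

Lemma mul_between a b x y : a <= x <= b -> Qmin (a * y) (b * y) <= x * y <= Qmax (a * y) (b * y).
Proof.
  intros [Hax Hxb]; destruct (Qlt_le_dec y 0).
  - split; [apply Q.min_le_iff; right | apply Q.max_le_iff; left]; nra.
  - split; [apply Q.min_le_iff; left | apply Q.max_le_iff; right]; nra.
Qed.

Lemma itv_mul_sound x y I J : in_itv x I -> in_itv y J -> in_itv (x * y) (itv_mul I J).
Proof.
  destruct I as [a b], J as [c d]; unfold in_itv, itv_mul; simpl; intros Hx Hy.
  destruct (mul_between _ _ _ y Hx) as [Hxl Hxu].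
  assert (Hy' : forall k, Qmin (k * c) (k * d) <= k * y <= Qmax (k * c) (k * d)).
  { intro k; rewrite !(Qmult_comm k); apply mul_between, Hy. }
  destruct (Hy' a), (Hy' b); split.
  - eapply Qle_trans; [apply Q.min_le_compat|]; eassumption.
  - eapply Qle_trans; [|apply Q.max_le_compat]; eassumption.
Qed.

Lemma itv_sq_sound x I : in_itv x I -> in_itv (x * x) (itv_sq I).
Proof.
  destruct I as [l h]; unfold in_itv, itv_sq; simpl; intros [Hl Hh].
  assert (x * x <= Qmax (l * l) (h * h)).
  { apply Q.max_le_iff; destruct (Qlt_le_dec x 0); [left|right]; nra. }
  destruct (Qle_bool l 0) eqn:E1, (Qle_bool 0 h) eqn:E2; simpl; split; try nra;
    apply Q.min_le_iff;
    [ apply Qle_bool_false in E2; right | apply Qle_bool_false in E1; left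
    | apply Qle_bool_false in E1; left ]; nra.
Qed.

Lemma itv_sqmax_sound x I : in_itv x I -> x * x <= itv_sqmax I.
Proof.
  destruct I as [l h]; unfold in_itv, itv_sqmax; simpl; intros [Hl Hh].
  apply Q.max_le_iff; destruct (Qlt_le_dec x 0); [left|right]; nra.
Qed.

(* The norm of p + q sqrt2 + theta (r + s sqrt2), written as a positive combination of
   squares so that interval evaluation gives usable upper bounds. *)
Definition normQ (p q r s : Q) : Q :=
  let u := p * p + -2 * (q * q) in
  let v := r * r + -2 * (s * s) in
  let n := q * r + -1 * (p * s) in
  let m := p * r + -2 * (q * s) + n in
  u * u + 4 * (m * m + n * n) + 2 * (v * v).

Add Morphism normQ with signature Qeq ==> Qeq ==> Qeq ==> Qeq ==> Qeq as normQ_morph.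
Proof. intros p p' Hp q q' Hq r r' Hr s s' Hs; unfold normQ; rewrite Hp Hq Hr Hs; reflexivity. Qed.

Lemma normQ_scale k p q r s :
  normQ (k * p) (k * q) (k * r) (k * s) == k * k * k * k * normQ p q r s.
Proof. unfold normQ; ring. Qed.

Definition box := (itv * itv * itv * itv)%type.
Definition in_box (p q r s : Q) (B : box) :=
  let '(I0, I1, I2, I3) := B in in_itv p I0 /\ in_itv q I1 /\ in_itv r I2 /\ in_itv s I3.

Definition box_bound (B : box) : Q :=
  let '(I0, I1, I2, I3) := B in
  let u := itv_add (itv_sq I0) (itv_scale (-2) (itv_sq I1)) in
  let v := itv_add (itv_sq I2) (itv_scale (-2) (itv_sq I3)) in
  let n := itv_add (itv_mul I1 I2) (itv_scale (-1) (itv_mul I0 I3)) in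
  let m := itv_add (itv_add (itv_mul I0 I2) (itv_scale (-2) (itv_mul I1 I3))) n in
  itv_sqmax u + 4 * (itv_sqmax m + itv_sqmax n) + 2 * itv_sqmax v.

Lemma box_bound_sound p q r s B : in_box p q r s B -> normQ p q r s <= box_bound B.
Proof.
  destruct B as [[[I0 I1] I2] I3]; simpl; intros (H0 & H1 & H2 & H3).
  pose proof (itv_add_sound _ _ _ _ (itv_sq_sound _ _ H0)
                (itv_scale_sound (-2) _ _ (itv_sq_sound _ _ H1))) as Hu.
  pose proof (itv_add_sound _ _ _ _ (itv_sq_sound _ _ H2)
                (itv_scale_sound (-2) _ _ (itv_sq_sound _ _ H3))) as Hv.
  pose proof (itv_add_sound _ _ _ _ (itv_mul_sound _ _ _ _ H1 H2)
                (itv_scale_sound (-1) _ _ (itv_mul_sound _ _ _ _ H0 H3))) as Hn.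
  pose proof (itv_add_sound _ _ _ _ (itv_add_sound _ _ _ _ (itv_mul_sound _ _ _ _ H0 H2)
                (itv_scale_sound (-2) _ _ (itv_mul_sound _ _ _ _ H1 H3))) Hn) as Hm.
  apply itv_sqmax_sound in Hu, Hv, Hn, Hm.
  unfold normQ; lra.
Qed.

(* theta (p + q sqrt2 + theta (r + s sqrt2))
     = (2 s - 2 r) + (r - 2 s) sqrt2 + theta (p + q sqrt2). *)
Definition mul_theta (B : box) : box :=
  let '(I0, I1, I2, I3) := B in
  (itv_add (itv_scale 2 I3) (itv_scale (-2) I2), itv_add I2 (itv_scale (-2) I3), I0, I1).

Lemma mul_theta_sound p q r s B :
  in_box p q r s B -> in_box (2 * s + -2 * r) (r + -2 * s) p q (mul_theta B).
Proof.
  destruct B as [[[I0 I1] I2] I3]; simpl; intros (H0 & H1 & H2 & H3).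
  repeat split; try apply H0; try apply H1;
    apply itv_add_sound; try apply itv_scale_sound; assumption.
Qed.

Definition vec := (Z * Z * Z * Z)%type.

Definition itv_shift (I : itv) (d : Z) : itv := (fst I - inject_Z d, snd I - inject_Z d).
Definition box_shift (B : box) (d : vec) : box :=
  let '(I0, I1, I2, I3) := B in let '(d0, d1, d2, d3) := d in
  (itv_shift I0 d0, itv_shift I1 d1, itv_shift I2 d2, itv_shift I3 d3).

Lemma box_shift_sound p q r s B d0 d1 d2 d3 : in_box p q r s B ->
  in_box (p - inject_Z d0) (q - inject_Z d1) (r - inject_Z d2) (s - inject_Z d3)
    (box_shift B (d0, d1, d2, d3)).
Proof.
  destruct B as [[[I0 I1] I2] I3]; unfold in_box, box_shift, itv_shift, in_itv; simpl; lra.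
Qed.

Definition mid_floor (I : itv) : Z := Qfloor ((fst I + snd I) / 2).

Definition candidates (B : box) : list vec :=
  let '(I0, I1, I2, I3) := B in
  let bits := (0 :: 1 :: nil)%Z in
  List.flat_map (fun e0 => List.flat_map (fun e1 => List.flat_map (fun e2 => List.map (fun e3 =>
    (mid_floor I0 + e0, mid_floor I1 + e1, mid_floor I2 + e2, mid_floor I3 + e3)%Z)
    bits) bits) bits) bits.

Definition shift_ok (B : box) (d : vec) : bool := negb (Qle_bool 1 (box_bound (box_shift B d))).

Lemma shift_ok_sound p q r s B d0 d1 d2 d3 : shift_ok B (d0, d1, d2, d3) = true ->
  in_box p q r s B ->
  normQ (p - inject_Z d0) (q - inject_Z d1) (r - inject_Z d2) (s - inject_Z d3) < 1.
Proof.
  unfold shift_ok; intros G H.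
  apply (box_shift_sound _ _ _ _ _ d0 d1 d2 d3), box_bound_sound in H.
  destruct (Qle_bool 1 _) eqn:E; [discriminate | apply Qle_bool_false in E; lra].
Qed.

Definition half (lo : bool) (I : itv) : itv :=
  let m := Qred ((fst I + snd I) / 2) in if lo then (fst I, m) else (m, snd I).

Definition bisect (lo : bool) (i : nat) (B : box) : box :=
  let '(I0, I1, I2, I3) := B in
  match i with
  | O => (half lo I0, I1, I2, I3)
  | 1%nat => (I0, half lo I1, I2, I3)
  | 2%nat => (I0, I1, half lo I2, I3)
  | _ => (I0, I1, I2, half lo I3)
  end.

Lemma half_sound x I : in_itv x I -> in_itv x (half true I) \/ in_itv x (half false I).
Proof.
  destruct I as [l h]; unfold in_itv, half; cbn [fst snd]; intros [Hl Hh].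
  rewrite !Qred_correct; destruct (Qlt_le_dec x ((l + h) / 2)); [left|right]; lra.
Qed.

Lemma bisect_sound p q r s i B :
  in_box p q r s B -> in_box p q r s (bisect true i B) \/ in_box p q r s (bisect false i B).
Proof.
  destruct B as [[[I0 I1] I2] I3]; simpl; intros (H0 & H1 & H2 & H3).
  destruct i as [|[|[|i]]]; simpl;
    [ destruct (half_sound _ _ H0) | destruct (half_sound _ _ H1)
    | destruct (half_sound _ _ H2) | destruct (half_sound _ _ H3) ]; tauto.
Qed.

(* Branch and bound: a box is certified when one of the 16 integer points around
   its centre is at norm distance [< 1] from the whole box or from its image under
   [mul_theta]; otherwise it is bisected, cycling through the four coordinates. *)
Definition box_certified (B : box) : bool :=
  if List.find (shift_ok B) (candidates B) then true
  else if List.find (shift_ok (mul_theta B)) (candidates (mul_theta B)) then true else false.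

Fixpoint certify (fuel i : nat) (B : box) : bool :=
  if box_certified B then true else
  match fuel with
  | O => false
  | S f =>
      if certify f (Nat.modulo (S i) 4) (bisect true i B)
      then certify f (Nat.modulo (S i) 4) (bisect false i B) else false
  end.

Definition unit_box : box := ((0, 1), (0, 1), (0, 1), (0, 1)).

Lemma unit_box_certified : certify 24 0 unit_box = true.
Proof. vm_cast_no_check (eq_refl true). Qed.

Definition theta_close (p q r s : Q) : Prop := exists d0 d1 d2 d3 : Z,
  normQ (p - inject_Z d0) (q - inject_Z d1) (r - inject_Z d2) (s - inject_Z d3) < 1 \/
  normQ (2 * s + -2 * r - inject_Z d0) (r + -2 * s - inject_Z d1)
        (p - inject_Z d2) (q - inject_Z d3) < 1.

Lemma certify_sound fuel : forall i B p q r s,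
  certify fuel i B = true -> in_box p q r s B -> theta_close p q r s.
Proof.
  induction fuel as [|fuel IH]; intros i B p q r s C H; simpl in C; unfold box_certified in C.
  all: destruct (List.find (shift_ok B) _) as [[[[d0 d1] d2] d3]|] eqn:E1;
    [ apply List.find_some in E1 as [_ G]; exists d0, d1, d2, d3; left;
      exact (shift_ok_sound _ _ _ _ _ _ _ _ _ G H) |].
  all: destruct (List.find (shift_ok (mul_theta B)) _) as [[[[d0 d1] d2] d3]|] eqn:E2;
    [ apply List.find_some in E2 as [_ G]; exists d0, d1, d2, d3; right;
      exact (shift_ok_sound _ _ _ _ _ _ _ _ _ G (mul_theta_sound _ _ _ _ _ H)) |].
  - discriminate.
  - destruct (certify fuel _ (bisect true i B)) eqn:C1; [|discriminate].
    destruct (bisect_sound _ _ _ _ i _ H) as [H'|H'];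
      [exact (IH _ _ _ _ _ _ C1 H') | exact (IH _ _ _ _ _ _ C H')].
Qed.

Lemma floor_frac x : in_itv (x - inject_Z (Qfloor x)) (0, 1).
Proof.
  pose proof (Qfloor_le x) as H0; pose proof (Qlt_floor x) as H.
  rewrite inject_Z_plus in H; unfold in_itv; simpl; change (inject_Z 1) with 1 in H; lra.
Qed.

Definition normZ (p q r s : Z) : Z :=
  (let u := p * p + -2 * (q * q) in
   let v := r * r + -2 * (s * s) in
   let n := q * r + -1 * (p * s) in
   let m := p * r + -2 * (q * s) + n in
   u * u + 4 * (m * m + n * n) + 2 * (v * v))%Z.

Lemma normZ_lt (M a b c d : Z) (x y z w : Q) : (0 < M)%Z ->
  inject_Z a == inject_Z M * x -> inject_Z b == inject_Z M * y ->
  inject_Z c == inject_Z M * z -> inject_Z d == inject_Z M * w ->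
  normQ x y z w < 1 -> (normZ a b c d < M * M * M * M)%Z.
Proof.
  intros HM Ha Hb Hc Hd Hn.
  assert (Hm : 0 < inject_Z M) by (unfold Qlt; simpl; lia).
  rewrite Zlt_Qlt.
  assert (E : inject_Z (normZ a b c d)
              == normQ (inject_Z a) (inject_Z b) (inject_Z c) (inject_Z d)).
  { unfold normZ, normQ; rewrite !(inject_Z_plus, inject_Z_mult); reflexivity. }
  rewrite E Ha Hb Hc Hd normQ_scale !inject_Z_mult.
  assert (0 < inject_Z M * inject_Z M * inject_Z M * inject_Z M)
    by (repeat apply Qmult_lt_0_compat; assumption).
  rewrite <- (Qmult_1_r (_ * _ * _ * inject_Z M)) at 2.
  apply Qmult_lt_l; assumption.
Qed.

(* Theta-Euclidean property of the norm form: [(a0, .., a3) / m] is approximated by an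
   integer point, either itself or after multiplication by theta.  The property is
   invariant under integer translations, so certifying the unit box suffices. *)
Lemma cover_int (a0 a1 a2 a3 m : Z) : (0 < m)%Z -> exists d0 d1 d2 d3 : Z,
  (normZ (a0 - m * d0) (a1 - m * d1) (a2 - m * d2) (a3 - m * d3) < m * m * m * m)%Z \/
  (normZ (2 * a3 - 2 * a2 - m * d0) (a2 - 2 * a3 - m * d1) (a0 - m * d2) (a1 - m * d3)
     < m * m * m * m)%Z.
Proof.
  intros Hm.
  assert (Hm0 : ~ inject_Z m == 0) by (unfold Qeq; simpl; lia).
  pose (x k := inject_Z k / inject_Z m).
  pose (f k := Qfloor (x k)).
  assert (H : in_box (x a0 - inject_Z (f a0)) (x a1 - inject_Z (f a1))
                     (x a2 - inject_Z (f a2)) (x a3 - inject_Z (f a3)) unit_box)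
    by (repeat split; apply floor_frac).
  destruct (certify_sound _ _ _ _ _ _ _ unit_box_certified H) as (d0 & d1 & d2 & d3 & [G|G]).
  - exists (f a0 + d0)%Z, (f a1 + d1)%Z, (f a2 + d2)%Z, (f a3 + d3)%Z; left.
    refine (normZ_lt _ _ _ _ _ _ _ _ _ Hm _ _ _ _ G);
      unfold x; rewrite !(inject_Z_plus, inject_Z_mult, inject_Z_opp); field; exact Hm0.
  - exists (2 * f a3 - 2 * f a2 + d0)%Z, (f a2 - 2 * f a3 + d1)%Z, (f a0 + d2)%Z, (f a1 + d3)%Z.
    right.
    refine (normZ_lt _ _ _ _ _ _ _ _ _ Hm _ _ _ _ G); unfold x, Z.sub;
      rewrite !(inject_Z_plus, inject_Z_mult, inject_Z_opp); field; exact Hm0.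
Qed.

End NormFormCover.

From mathcomp Require Import ring zify ssrZ.

Import Order.TTheory GRing.Theory Num.Theory.
Local Open Scope ring_scope.

Lemma ex_minimizer (T : Type) (R : archiNumDomainType) (P : T -> Prop) (m : T -> R) :
  (forall x, m x \is a Num.nat) -> (exists x, P x) ->
  exists2 x, P x & forall y, P y -> m x <= m y.
Proof.
move=> m_nat [x0 Px0]; pose Q n := exists2 x, P x & Num.truncn (m x) = n.
have [n [[[x Px <-] n_min] _]] := dec_inh_nat_subset_has_unique_least_element Q
  (fun n => classic (Q n)) (ex_intro _ _ (ex_intro2 _ _ x0 Px0 erefl)).
exists x => // y Py; rewrite -(truncnK (m_nat x)) -(truncnK (m_nat y)) ler_nat.
by apply/ssrnat.leP/n_min; exists y.
Qed.

Lemma sqrt2_irrational (p q : int) : p ^+ 2 = 2 * q ^+ 2 -> q = 0.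
Proof.
move=> e; have en : (expn (absz p) 2 = 2 * expn (absz q) 2)%nat by rewrite -!abszX e abszM.
apply/eqP; rewrite -absz_eq0; apply: contraT => q0.
have p0 : (0 < absz p)%nat by move: q0 en; rewrite -lt0n; nia.
have := congr1 (logn 2) en.
by rewrite lognM ?expn_gt0 ?lt0n ?q0 // !lognX (@logn_prime 2 2 isT) /=; lia.
Qed.

(* The two hypotheses on [c +- 1] multiply to [(w1 + w3)^2 <= 8 w1 w3], while AM-GM gives
   [(w1 e1 + w3 e3)^2 >= 4 w1 w3 e1 e3 >= 8 w1 w3]. *)
Lemma unit_stable_weights_le (R : numDomainType) (w1 w3 e1 e3 c : R) :
  0 <= w1 -> 0 <= w3 -> 0 <= e1 -> 0 <= e3 -> c ^+ 2 = 2 ->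
  w1 + w3 <= w1 * (c + 1) ^+ 2 + w3 * (c - 1) ^+ 2 ->
  w1 + w3 <= w1 * (c - 1) ^+ 2 + w3 * (c + 1) ^+ 2 ->
  2 <= e1 * e3 -> w1 + w3 <= w1 * e1 + w3 * e3.
Proof.
move=> w1p w3p e1p e3p c2 le_p le_m e13.
rewrite -subr_ge0 in le_p; rewrite -subr_ge0 in le_m.
have sum_sq : (w1 + w3) ^+ 2 <= 8 * (w1 * w3).
  rewrite -subr_ge0 -(pmulr_rge0 _ (ltr0n R 4)).
  have := mulr_ge0 le_p le_m.
  have -> : (w1 * (c + 1) ^+ 2 + w3 * (c - 1) ^+ 2 - (w1 + w3)) *
            (w1 * (c - 1) ^+ 2 + w3 * (c + 1) ^+ 2 - (w1 + w3))
          = c ^+ 2 * ((w1 + w3) ^+ 2 * c ^+ 2 - 4 * (w1 - w3) ^+ 2) by ring.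
  by rewrite c2 (_ : _ * _ = 4%:R * (8 * (w1 * w3) - (w1 + w3) ^+ 2)) //; ring.
have amgm : 8 * (w1 * w3) <= (w1 * e1 + w3 * e3) ^+ 2.
  rewrite -subr_ge0.
  have -> : (w1 * e1 + w3 * e3) ^+ 2 - 8 * (w1 * w3) =
            (w1 * e1 - w3 * e3) ^+ 2 + 4 * (w1 * w3) * (e1 * e3 - 2) by ring.
  apply: addr_ge0; last by rewrite !mulr_ge0 // subr_ge0.
  by rewrite -realEsqr realB // ger0_real // mulr_ge0.
by rewrite -ler_sqr ?nnegrE ?addr_ge0 ?mulr_ge0 // (le_trans sum_sq amgm).
Qed.

Lemma eq_mod_sq2 {R : ringType} (c x y k : R) : c ^+ 2 = 2 -> x - y = k * (c ^+ 2 - 2) -> x = y.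
Proof. by move=> c2; rewrite c2 subrr mulr0 => /eqP; rewrite subr_eq0 => /eqP. Qed.

Definition theta3 : algC := theta_a 3.
Definition sqrt2 : algC := theta ^+ 2 + 2.

Lemma zeta16_8 : zeta16 ^+ 8 = -1.
Proof. by rewrite /zeta16 rootCK. Qed.

Lemma eq_mod_zeta16 (x y k : algC) : x - y = (zeta16 ^+ 8 + 1) * k -> x = y.
Proof. by rewrite zeta16_8 addNr mul0r => /eqP; rewrite subr_eq0 => /eqP. Qed.

Lemma norm_zeta16 : `|zeta16| = 1.
Proof.
apply/eqP; rewrite -(@pexpr_eq1 _ _ 8 isT (normr_ge0 zeta16)).
by rewrite -normrX zeta16_8 normrN normr1.
Qed.

Lemma conj_zeta16 : zeta16^* = zeta16 ^+ 15.
Proof.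
have z0 : zeta16 != 0 by rewrite -normr_eq0 norm_zeta16 oner_eq0.
apply: (mulfI z0); have -> : zeta16 * zeta16^* = 1 by rewrite -normCK norm_zeta16 expr1n.
by symmetry; apply: (@eq_mod_zeta16 _ _ (zeta16 ^+ 8 - 1)); ring.
Qed.

Lemma thetaE : theta = zeta16 + zeta16 ^+ 7.
Proof. by rewrite /theta /theta_a expr1. Qed.

Lemma theta3E : theta3 = theta ^+ 3 + 3 * theta.
Proof.
rewrite /theta3 /theta_a thetaE.
by apply: (@eq_mod_zeta16 _ _ (- 3 * zeta16 - 3 * zeta16 ^+ 7)); ring.
Qed.

Lemma theta_a9 : theta_a 9 = - theta.
Proof.
rewrite thetaE /theta_a; apply: (@eq_mod_zeta16 _ _ (zeta16 + zeta16 ^+ 7 - zeta16 ^+ 15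
  + zeta16 ^+ 23 - zeta16 ^+ 31 + zeta16 ^+ 39 - zeta16 ^+ 47 + zeta16 ^+ 55)); ring.
Qed.

Lemma theta_a11 : theta_a 11 = - theta3.
Proof.
rewrite /theta3 /theta_a; apply: (@eq_mod_zeta16 _ _ (zeta16 ^+ 3 + zeta16 ^+ 21 - zeta16 ^+ 29
  + zeta16 ^+ 37 - zeta16 ^+ 45 + zeta16 ^+ 53 - zeta16 ^+ 61 + zeta16 ^+ 69)); ring.
Qed.

Lemma sqrt2_sq : sqrt2 ^+ 2 = 2.
Proof.
rewrite /sqrt2 thetaE; apply: (@eq_mod_zeta16 _ _ (2 + 4 * zeta16 ^+ 2 + zeta16 ^+ 4
  + 6 * zeta16 ^+ 8 - zeta16 ^+ 12 + 4 * zeta16 ^+ 14 + zeta16 ^+ 20)); ring.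
Qed.

Lemma theta3_sq : theta3 ^+ 2 + 2 = - sqrt2.
Proof.
by apply: (eq_mod_sq2 _ _ _ sqrt2 sqrt2_sq); rewrite theta3E /sqrt2; ring.
Qed.

Lemma conj_theta : theta^* = - theta.
Proof.
rewrite thetaE rmorphD /= rmorphXn /= conj_zeta16.
apply: (@eq_mod_zeta16 _ _ (zeta16 + zeta16 ^+ 7 - zeta16 ^+ 9 + zeta16 ^+ 17 - zeta16 ^+ 25
  + zeta16 ^+ 33 - zeta16 ^+ 41 + zeta16 ^+ 49 - zeta16 ^+ 57 + zeta16 ^+ 65 - zeta16 ^+ 73
  + zeta16 ^+ 81 - zeta16 ^+ 89 + zeta16 ^+ 97)); ring.
Qed.

Lemma conj_theta3 : theta3^* = - theta3.
Proof. by rewrite theta3E rmorphD /= rmorphXn /= rmorphM /= rmorph_nat conj_theta; ring. Qed.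

Lemma sqrt2_real : sqrt2 \is Num.real.
Proof. by rewrite CrealE /sqrt2 rmorphD /= rmorphXn /= conj_theta rmorph_nat sqrrN. Qed.

Lemma evalZ0 t : evalZ 0 t = 0.
Proof. by rewrite /evalZ rmorph0 horner0. Qed.
Lemma evalZD p q t : evalZ (p + q) t = evalZ p t + evalZ q t.
Proof. by rewrite /evalZ rmorphD hornerD. Qed.
Lemma evalZN p t : evalZ (- p) t = - evalZ p t.
Proof. by rewrite /evalZ rmorphN hornerN. Qed.
Lemma evalZB p q t : evalZ (p - q) t = evalZ p t - evalZ q t.
Proof. by rewrite evalZD evalZN. Qed.
Lemma evalZM p q t : evalZ (p * q) t = evalZ p t * evalZ q t.
Proof. by rewrite /evalZ rmorphM hornerM. Qed.
Lemma evalZC c t : evalZ c%:P t = c%:~R.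
Proof. by rewrite /evalZ map_polyC hornerC. Qed.
Lemma evalZ1 t : evalZ 1 t = 1.
Proof. by rewrite -polyC1 evalZC. Qed.
Lemma evalZX t : evalZ 'X t = t.
Proof. by rewrite /evalZ map_polyX hornerX. Qed.
Lemma evalZXn n t : evalZ 'X^n t = t ^+ n.
Proof. by rewrite /evalZ map_polyXn hornerXn. Qed.
Lemma evalZ_comp p q t : evalZ (p \Po q) t = evalZ p (evalZ q t).
Proof. by rewrite /evalZ map_comp_poly horner_comp. Qed.
Lemma evalZ_conj p t : evalZ p t^* = (evalZ p t)^*.
Proof.
rewrite /evalZ -horner_map /= -map_poly_comp; congr (_.[_]).
by apply: eq_map_poly => k /=; rewrite rmorph_int.
Qed.

Definition evalZE := (evalZ0, evalZD, evalZN, evalZM, evalZC, evalZ1, evalZX, evalZXn, evalZ_comp).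

(* The roots of the minimal polynomial X^4 + 4 X^2 + 2 of theta, all purely imaginary. *)
Definition theta_conjugate (t : algC) : Prop := [/\ (t ^+ 2 + 2) ^+ 2 = 2, t^* = - t & t != 0].

Lemma theta_conjugate_theta : theta_conjugate theta.
Proof.
split; [exact: sqrt2_sq | exact: conj_theta |].
apply/eqP => th0; have /eqP := sqrt2_sq.
by rewrite /sqrt2 th0 expr0n add0r -natrX eqr_nat.
Qed.

Lemma theta_conjugate_theta3 : theta_conjugate theta3.
Proof.
split; [by rewrite theta3_sq sqrrN sqrt2_sq | exact: conj_theta3 |].
apply/eqP => th0; have /eqP := sqrt2_sq.
by rewrite -[sqrt2]opprK -theta3_sq th0 expr0n add0r sqrrN -natrX eqr_nat.
Qed.

(* Coordinates in the integral basis 1, sqrt2, theta, theta sqrt2, with sqrt2 = theta^2 + 2. *)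
Definition basis_comb (p q r s : int) (t : algC) : algC :=
  p%:~R + q%:~R * (t ^+ 2 + 2) + t * (r%:~R + s%:~R * (t ^+ 2 + 2)).

Definition basis_poly (p q r s : int) : {poly int} :=
  p%:P + q%:P * ('X^2 + 2%:P) + 'X * (r%:P + s%:P * ('X^2 + 2%:P)).

Lemma evalZ_basis_poly p q r s t : evalZ (basis_poly p q r s) t = basis_comb p q r s t.
Proof. by rewrite /basis_poly /basis_comb !evalZE. Qed.

Lemma mul_basis_comb p q r s t : (t ^+ 2 + 2) ^+ 2 = 2 ->
  t * basis_comb p q r s t = basis_comb (2 * s - 2 * r) (r - 2 * s) p q t.
Proof.
move=> t2; apply: (eq_mod_sq2 _ _ _ s%:~R t2).
by rewrite /basis_comb !(intrD, intrM, intrN); ring.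
Qed.

Lemma basis_coords (f : {poly int}) : exists p q r s : int,
  forall t, (t ^+ 2 + 2) ^+ 2 = 2 -> evalZ f t = basis_comb p q r s t.
Proof.
elim/poly_ind: f => [|f k [p [q [r [s IH]]]]].
  by exists 0, 0, 0, 0 => t _; rewrite evalZ0 /basis_comb; ring.
exists (2 * s - 2 * r + k), (r - 2 * s), p, q => t t2.
rewrite evalZD evalZM evalZX evalZC IH // mulrC mul_basis_comb //.
by rewrite /basis_comb intrD; ring.
Qed.

Lemma conj_basis_comb p q r s t : t^* = - t ->
  (basis_comb p q r s t)^* = p%:~R + q%:~R * (t ^+ 2 + 2) - t * (r%:~R + s%:~R * (t ^+ 2 + 2)).
Proof.
move=> tN; have sqC : (t ^+ 2 + 2)^* = t ^+ 2 + 2.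
  by rewrite rmorphD /= rmorphXn /= tN sqrrN rmorph_nat.
rewrite /basis_comb; move: (t ^+ 2 + 2) sqC => c cC.
by rewrite !(rmorphD, rmorphM) /= !rmorph_int tN cC; ring.
Qed.

Lemma int_comb_sqrt2_eq0 (a b : int) (c : algC) :
  c ^+ 2 = 2 -> a%:~R + b%:~R * c = 0 -> a = 0 /\ b = 0.
Proof.
move=> c2 e; have ea : (a%:~R : algC) = - (b%:~R * c) by rewrite -[LHS]subr0 -e; ring.
have /intr_inj/sqrt2_irrational b0 : ((a ^+ 2)%:~R : algC) = (2 * b ^+ 2)%:~R.
  by rewrite !rmorphXn /= rmorphM /= ea sqrrN exprMn c2; ring.
by split=> //; apply/eqP; rewrite -(intr_eq0 algC) ea b0 mul0r oppr0.
Qed.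

Lemma basis_comb_eq0 p q r s t : theta_conjugate t -> basis_comb p q r s t = 0 ->
  [/\ p = 0, q = 0, r = 0 & s = 0].
Proof.
case=> t2 tN t0 e1.
set u := p%:~R + q%:~R * (t ^+ 2 + 2); set v := r%:~R + s%:~R * (t ^+ 2 + 2).
have e2 : u - t * v = 0 by rewrite -(conj_basis_comb p q r s t tN) e1 rmorph0.
have u0 : u = 0.
  apply: (@mulIf _ 2); rewrite ?pnatr_eq0 // mul0r.
  by rewrite -[RHS](addr0 0) -{1}e1 -e2 /basis_comb -/u -/v; ring.
have v0 : v = 0.
  apply/eqP; move: e1; rewrite /basis_comb -/u -/v u0 add0r => /eqP.
  by rewrite mulf_eq0 (negbTE t0).
by have [-> ->] := int_comb_sqrt2_eq0 _ _ _ t2 u0; have [-> ->] := int_comb_sqrt2_eq0 _ _ _ t2 v0.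
Qed.

Lemma evalZ_conjugate_eq t u (f g : {poly int}) : theta_conjugate t -> theta_conjugate u ->
  evalZ f t = evalZ g t -> evalZ f u = evalZ g u.
Proof.
move=> ct cu e; have [p [q [r [s c]]]] := basis_coords (f - g).
have [t2 _ _] := ct; have [u2 _ _] := cu.
have [p0 q0 r0 s0] : [/\ p = 0, q = 0, r = 0 & s = 0].
  by apply: (basis_comb_eq0 _ _ _ _ _ ct); rewrite -c // evalZB e subrr.
apply/eqP; rewrite -subr_eq0 -evalZB c // p0 q0 r0 s0 /basis_comb; apply/eqP; ring.
Qed.

Definition sq1 (f : {poly int}) : algC := `|evalZ f theta| ^+ 2.
Definition sq3 (f : {poly int}) : algC := `|evalZ f theta3| ^+ 2.
(* [fnorm f] is the norm N_{K/Q} of f(theta), and [sqsum f] half its squared canonical norm. *)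
Definition fnorm (f : {poly int}) : algC := sq1 f * sq3 f.
Definition sqsum (f : {poly int}) : algC := sq1 f + sq3 f.

Definition qformA (p q r s : int) : int :=
  p ^+ 2 + 2 * q ^+ 2 + 2 * r ^+ 2 + 4 * s ^+ 2 - 4 * r * s.
Definition qformB (p q r s : int) : int :=
  2 * p * q - r ^+ 2 - 2 * s ^+ 2 + 4 * r * s.
Definition norm_form (p q r s : int) : int := qformA p q r s ^+ 2 - 2 * qformB p q r s ^+ 2.

Lemma sqr_norm_basis_comb p q r s t : theta_conjugate t ->
  `|basis_comb p q r s t| ^+ 2 = (qformA p q r s)%:~R + (qformB p q r s)%:~R * (t ^+ 2 + 2).
Proof.
case=> t2 tN _; rewrite normCK (conj_basis_comb p q r s t tN).
have -> : basis_comb p q r s t * (p%:~R + q%:~R * (t ^+ 2 + 2) - t * (r%:~R + s%:~R * (t ^+ 2 + 2)))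
  = (p%:~R + q%:~R * (t ^+ 2 + 2)) ^+ 2 - t ^+ 2 * (r%:~R + s%:~R * (t ^+ 2 + 2)) ^+ 2.
  by rewrite /basis_comb; ring.
rewrite -{2}[t ^+ 2](addrK 2); move: (t ^+ 2 + 2) t2 => c c2.
apply: (eq_mod_sq2 _ _ _ (2 * s%:~R ^+ 2 - s%:~R ^+ 2 * c - 2 * r%:~R * s%:~R + q%:~R ^+ 2) c2).
by rewrite /qformA /qformB !(intrD, intrM, intrN, rmorphXn) /=; ring.
Qed.

Lemma sq13_basis f p q r s : evalZ f theta = basis_comb p q r s theta ->
  sq1 f = (qformA p q r s)%:~R + (qformB p q r s)%:~R * sqrt2 /\
  sq3 f = (qformA p q r s)%:~R - (qformB p q r s)%:~R * sqrt2.
Proof.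
rewrite -evalZ_basis_poly => e; split.
  by rewrite /sq1 e evalZ_basis_poly sqr_norm_basis_comb //; exact: theta_conjugate_theta.
rewrite /sq3 (evalZ_conjugate_eq _ _ _ _ theta_conjugate_theta theta_conjugate_theta3 e).
by rewrite evalZ_basis_poly sqr_norm_basis_comb ?theta3_sq ?mulrN //; exact: theta_conjugate_theta3.
Qed.

Lemma fnorm_basis f p q r s : evalZ f theta = basis_comb p q r s theta ->
  fnorm f = (norm_form p q r s)%:~R.
Proof.
case/sq13_basis=> e1 e3; rewrite /fnorm e1 e3 /norm_form.
move: (qformA p q r s) (qformB p q r s) => a b.
apply: (eq_mod_sq2 _ _ _ (- b%:~R ^+ 2) sqrt2_sq).
by rewrite !(intrD, intrM, intrN, rmorphXn) /=; ring.
Qed.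

Lemma sqsum_basis f p q r s : evalZ f theta = basis_comb p q r s theta ->
  sqsum f = (2 * qformA p q r s)%:~R.
Proof. by case/sq13_basis=> e1 e3; rewrite /sqsum e1 e3 intrM; ring. Qed.

Lemma sq1_ge0 f : 0 <= sq1 f. Proof. exact: exprn_ge0. Qed.
Lemma sq3_ge0 f : 0 <= sq3 f. Proof. exact: exprn_ge0. Qed.

Lemma fnorm_nat f : fnorm f \is a Num.nat.
Proof.
have [p [q [r [s c]]]] := basis_coords f.
have e := fnorm_basis _ _ _ _ _ (c _ sqrt2_sq).
by rewrite natrEint {1}e intr_int mulr_ge0 ?sq1_ge0 ?sq3_ge0.
Qed.

Lemma sqsum_nat f : sqsum f \is a Num.nat.
Proof.
have [p [q [r [s c]]]] := basis_coords f.
have e := sqsum_basis _ _ _ _ _ (c _ sqrt2_sq).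
by rewrite natrEint {1}e intr_int addr_ge0 ?sq1_ge0 ?sq3_ge0.
Qed.

Lemma sq13_evalZ_eq f g : evalZ f theta = evalZ g theta -> sq1 f = sq1 g /\ sq3 f = sq3 g.
Proof.
move=> e; rewrite /sq1 /sq3 e.
by rewrite (evalZ_conjugate_eq _ _ _ _ theta_conjugate_theta theta_conjugate_theta3 e).
Qed.

Lemma fnorm_evalZ_eq f g : evalZ f theta = evalZ g theta -> fnorm f = fnorm g.
Proof. by case/sq13_evalZ_eq=> e1 e3; rewrite /fnorm e1 e3. Qed.

Lemma sqsum_evalZ_eq f g : evalZ f theta = evalZ g theta -> sqsum f = sqsum g.
Proof. by case/sq13_evalZ_eq=> e1 e3; rewrite /sqsum e1 e3. Qed.

Lemma sq1M f g : sq1 (f * g) = sq1 f * sq1 g.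
Proof. by rewrite /sq1 evalZM normrM exprMn. Qed.
Lemma sq3M f g : sq3 (f * g) = sq3 f * sq3 g.
Proof. by rewrite /sq3 evalZM normrM exprMn. Qed.
Lemma fnormM f g : fnorm (f * g) = fnorm f * fnorm g.
Proof. by rewrite /fnorm sq1M sq3M; ring. Qed.

Lemma fnorm_gt0 f : evalZ f theta != 0 -> 0 < fnorm f.
Proof.
move=> f0; rewrite /fnorm /sq1 /sq3 mulr_gt0 // exprn_gt0 // normr_gt0 //.
apply: contra_neq f0 => e3; rewrite -(evalZ0 theta).
apply: (evalZ_conjugate_eq _ _ _ _ theta_conjugate_theta3 theta_conjugate_theta).
by rewrite e3 evalZ0.
Qed.

Lemma fnormC (k : int) : fnorm k%:P = (k ^+ 4)%:~R.
Proof.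
have sqC t : `|evalZ k%:P t| ^+ 2 = (k ^+ 2)%:~R.
  by rewrite evalZC -normrX -rmorphXn ger0_norm // ler0z exprn_even_ge0.
by rewrite /fnorm /sq1 /sq3 !sqC -rmorphM -exprD.
Qed.

Lemma fnormX : fnorm 'X = 2.
Proof.
have e1 : theta ^+ 2 = sqrt2 - 2 by rewrite /sqrt2 addrK.
have e3 : theta3 ^+ 2 = - sqrt2 - 2 by rewrite -theta3_sq addrK.
rewrite /fnorm /sq1 /sq3 !evalZX !normCK conj_theta conj_theta3 !mulrN -!expr2 e1 e3.
by apply: (eq_mod_sq2 _ _ _ (-1) sqrt2_sq); ring.
Qed.

Lemma canon_normE f : canon_norm f = sqrtC (sqsum f *+ 2).
Proof.
rewrite /canon_norm !big_cons big_nil addr0 -/theta -/theta3 theta_a9 theta_a11.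
rewrite -conj_theta -conj_theta3 !evalZ_conj !norm_conjC /sqsum /sq1 /sq3.
by congr sqrtC; ring.
Qed.

Lemma canon_norm_le f g : sqsum f <= sqsum g -> canon_norm f <= canon_norm g.
Proof.
move=> le_fg; rewrite !canon_normE ler_sqrtC ?ler_wMn2r // nnegrE mulrn_wge0 //.
  exact: addr_ge0 (sq1_ge0 f) (sq3_ge0 f).
exact: addr_ge0 (sq1_ge0 g) (sq3_ge0 g).
Qed.

Lemma norm_form_cover (a0 a1 a2 a3 m : int) : 0 < m -> exists d0 d1 d2 d3 : int,
  norm_form (a0 - m * d0) (a1 - m * d1) (a2 - m * d2) (a3 - m * d3) < m ^+ 4 \/
  norm_form (2 * a3 - 2 * a2 - m * d0) (a2 - 2 * a3 - m * d1) (a0 - m * d2) (a1 - m * d3)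
    < m ^+ 4.
Proof.
move=> m0; have m0Z : Z.lt Z0 (Z_of_int m) by lia.
have [D0 [D1 [D2 [D3 cover]]]] :=
  NormFormCover.cover_int (Z_of_int a0) (Z_of_int a1) (Z_of_int a2) (Z_of_int a3) (Z_of_int m) m0Z.
move: cover; rewrite -[D0]int_of_ZK -[D1]int_of_ZK -[D2]int_of_ZK -[D3]int_of_ZK => cover.
exists (int_of_Z D0), (int_of_Z D1), (int_of_Z D2), (int_of_Z D3).
move: (int_of_Z D0) (int_of_Z D1) (int_of_Z D2) (int_of_Z D3) cover => d0 d1 d2 d3.
by rewrite /NormFormCover.normZ /norm_form /qformA /qformB => -[lt|lt]; [left|right]; lia.
Qed.

Definition theta3_poly : {poly int} := 'X^3 + 3%:P * 'X.

(* The product of the three other conjugates f(-theta), f(theta3), f(-theta3). *)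
Definition norm_cofactor (f : {poly int}) : {poly int} :=
  (f \Po - 'X) * (f \Po theta3_poly) * (f \Po - theta3_poly).

Lemma norm_cofactorE f : evalZ f theta * evalZ (norm_cofactor f) theta = fnorm f.
Proof.
have t3 : evalZ theta3_poly theta = theta3 by rewrite /theta3_poly !evalZE theta3E.
rewrite /norm_cofactor !evalZM !evalZ_comp !evalZN evalZX t3 -conj_theta -conj_theta3 !evalZ_conj.
by rewrite /fnorm /sq1 /sq3 !normCK; ring.
Qed.

Lemma fnorm_lt_of_scaled (b w h : {poly int}) (m : int) : fnorm b = m%:~R -> 0 < m ->
  evalZ (b * w) theta = evalZ (m%:P * h) theta -> fnorm w < (m ^+ 4)%:~R -> fnorm h < fnorm b.
Proof.
move=> fb m0 /fnorm_evalZ_eq; rewrite !fnormM fnormC fb => e lt_w.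
have m4 : 0 < (m ^+ 4)%:~R :> algC by rewrite ltr0z exprn_gt0.
by rewrite -(ltr_pM2l m4) -e [X in _ < X]mulrC ltr_pM2l // ltr0z.
Qed.

(* With c the norm cofactor of b and m = N(b), we have g / b = g c / m; rounding the
   coordinates of g c / m (or of theta g c / m) to those of some d gives
   b (g c - m d) = m (g - b d). *)
Lemma theta_euclid (g b : {poly int}) : evalZ b theta != 0 ->
  exists d, fnorm (g - b * d) < fnorm b \/ fnorm ('X * g - b * d) < fnorm b.
Proof.
move=> b0; have [p [q [r [s cb]]]] := basis_coords b.
have := fnorm_basis _ _ _ _ _ (cb _ sqrt2_sq); move: (norm_form p q r s) => m fb.
have m0 : 0 < m by rewrite -(ltr0z algC) -fb fnorm_gt0.
have [a0 [a1 [a2 [a3 ca]]]] := basis_coords (g * norm_cofactor b).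
have bc := norm_cofactorE b; rewrite fb in bc; move: (norm_cofactor b) bc ca => c bc ca.
have [d0 [d1 [d2 [d3 [lt_d|lt_d]]]]] := norm_form_cover a0 a1 a2 a3 m m0;
  exists (basis_poly d0 d1 d2 d3); [left|right].
- apply: (fnorm_lt_of_scaled b (g * c - m%:P * basis_poly d0 d1 d2 d3) _ m fb m0).
    by rewrite !(evalZB, evalZM, evalZC) -bc; ring.
  rewrite (fnorm_basis _ (a0 - m * d0) (a1 - m * d1) (a2 - m * d2) (a3 - m * d3)) ?ltr_int //.
  by rewrite evalZB (ca _ sqrt2_sq) evalZM evalZC evalZ_basis_poly /basis_comb !intrB !intrM; ring.
- apply: (fnorm_lt_of_scaled b ('X * (g * c) - m%:P * basis_poly d0 d1 d2 d3) _ m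
          fb m0).
    by rewrite !(evalZB, evalZM, evalZC, evalZX) -bc; ring.
  rewrite (fnorm_basis _ (2 * a3 - 2 * a2 - m * d0) (a2 - 2 * a3 - m * d1)
                         (a0 - m * d2) (a1 - m * d3)) ?ltr_int //.
  rewrite evalZB evalZM evalZX (ca _ sqrt2_sq) mul_basis_comb; last exact: sqrt2_sq.
  by rewrite evalZM evalZC evalZ_basis_poly /basis_comb !intrB !intrM; ring.
Qed.

Lemma residue_mod_theta (f : {poly int}) :
  exists e, evalZ f theta = theta * evalZ e theta \/ evalZ f theta = 1 + theta * evalZ e theta.
Proof.
elim/poly_ind: f => [|f c _]; first by exists 0; left; rewrite !evalZ0 mulr0.
have two : (2 : algC) = theta * - (theta ^+ 3 + 4 * theta).
  by apply: (eq_mod_sq2 _ _ _ 1 sqrt2_sq); rewrite /sqrt2; ring.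
have [j [->|->]] : exists j : int, c = j * 2 \/ c = j * 2 + 1.
  exists (divz c 2); have := divz_eq c 2.
  by have := modz_ge0 c (isT : (2 : int) != 0); have := ltz_pmod c (isT : (0 : int) < 2); lia.
all: exists (f + j%:P * - ('X^3 + 4%:P * 'X)).
all: rewrite !evalZE ?intrD intrM (_ : 2%:~R = 2 :> algC) // two.
  by left; ring.
by right; ring.
Qed.

Definition generates (I : algC -> Prop) (f : {poly int}) : Prop :=
  forall x, I x <-> exists q : {poly int}, x = evalZ f theta * evalZ q theta.

Section Ideal.
Variable I : algC -> Prop.
Hypothesis idealI : is_ideal I.

Lemma ideal_Ztheta x : I x -> exists f, x = evalZ f theta.
Proof. by case: idealI => sub _ _ _ /sub. Qed.

Lemma ideal_add x y : I x -> I y -> I (x + y).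
Proof. by case: idealI => _ _ add _; apply: add. Qed.

Lemma ideal_mull f x : I x -> I (evalZ f theta * x).
Proof. by case: idealI => _ _ _ mul; apply: mul; exists f. Qed.

Lemma ideal_sub_mul x y f : I x -> I y -> I (x - y * evalZ f theta).
Proof.
move=> Ix Iy; apply: ideal_add => //.
by rewrite -mulrN -evalZN mulrC; apply: ideal_mull.
Qed.

Lemma min_fnorm_generates b : I (evalZ b theta) -> evalZ b theta != 0 ->
  (forall g, I (evalZ g theta) -> evalZ g theta != 0 -> fnorm b <= fnorm g) -> generates I b.
Proof.
move=> Ib b0 b_min.
have small_eq0 h : I (evalZ h theta) -> fnorm h < fnorm b -> evalZ h theta = 0.
  move=> Ih; apply: contraTeq => h0; apply/negP => lt.
  by have := lt_le_trans lt (b_min h Ih h0); rewrite ltxx.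
have [_ _ theta0] := theta_conjugate_theta.
move=> x; split; last by case=> q ->; rewrite mulrC; apply: ideal_mull.
move=> Ix; have [g ex] := ideal_Ztheta _ Ix; subst x.
have [d [lt_d|lt_d]] := theta_euclid g b b0.
  exists d; apply/eqP; rewrite -subr_eq0 -evalZM -evalZB; apply/eqP/small_eq0 => //.
  by rewrite evalZB evalZM; apply: ideal_sub_mul.
have e : theta * evalZ g theta = evalZ b theta * evalZ d theta.
  have Ixg : I (evalZ 'X theta * evalZ g theta) by apply: ideal_mull.
  have := small_eq0 ('X * g - b * d); rewrite evalZB !evalZM evalZX in Ixg * => /(_ _ lt_d).
  by move=> /(_ (ideal_sub_mul _ _ _ Ixg Ib))/eqP; rewrite subr_eq0 => /eqP.
have [e' [de|de]] := residue_mod_theta d.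
  by exists e'; apply: (mulfI theta0); rewrite e de; ring.
(* [d = 1 + theta e'] would make [g - b e'] an element of I of norm [fnorm b / 2]. *)
have ea : evalZ ('X * (g - b * e')) theta = evalZ b theta.
  by rewrite !evalZE mulrBr e de; ring.
have Ia : I (evalZ (g - b * e') theta) by rewrite evalZB evalZM; apply: ideal_sub_mul.
have a0 : evalZ (g - b * e') theta != 0.
  by apply: contra_neq b0 => a0; rewrite -ea evalZM a0 mulr0.
have lt_a : fnorm (g - b * e') < fnorm b.
  by rewrite -(fnorm_evalZ_eq _ _ ea) fnormM fnormX ltr_pMl ?ltr1n ?fnorm_gt0.
by move: a0; rewrite (small_eq0 _ Ia lt_a) eqxx.
Qed.

Lemma ideal_principal : (exists x, I x /\ x != 0) -> exists b, generates I b.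
Proof.
case=> x [Ix x0]; have [f ef] := ideal_Ztheta _ Ix; subst x.
have [b [Ib b0] b_min] := ex_minimizer _ _ (fun f => I (evalZ f theta) /\ evalZ f theta != 0)
  fnorm fnorm_nat (ex_intro _ f (conj Ix x0)).
by exists b; apply: min_fnorm_generates => // g Ig g0; apply: b_min.
Qed.

End Ideal.

Lemma generates_mul_unit I f u v : generates I f ->
  evalZ u theta * evalZ v theta = 1 -> generates I (f * u).
Proof.
move=> Gf uv x; rewrite Gf; split; case=> q ->.
  by exists (v * q); rewrite !evalZM -[LHS]mulr1 -uv; ring.
by exists (u * q); rewrite !evalZM; ring.
Qed.

Definition unit_eps : {poly int} := 'X^2 + 3%:P.
Definition unit_eps_inv : {poly int} := 'X^2 + 1.

Lemma unit_epsE : evalZ unit_eps theta = sqrt2 + 1 /\ evalZ unit_eps theta3 = - (sqrt2 - 1).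
Proof.
rewrite /unit_eps !evalZE /sqrt2; split; first ring.
by rewrite -(addrK 2 (theta3 ^+ 2)) theta3_sq /sqrt2; ring.
Qed.

Lemma unit_eps_invE : evalZ unit_eps_inv theta = sqrt2 - 1 /\
  evalZ unit_eps_inv theta3 = - (sqrt2 + 1).
Proof.
rewrite /unit_eps_inv !evalZE /sqrt2; split; first ring.
by rewrite -(addrK 2 (theta3 ^+ 2)) theta3_sq /sqrt2; ring.
Qed.

Lemma unit_epsK : evalZ unit_eps theta * evalZ unit_eps_inv theta = 1.
Proof.
rewrite (proj1 unit_epsE) (proj1 unit_eps_invE).
by apply: (eq_mod_sq2 _ _ _ 1 sqrt2_sq); ring.
Qed.

Lemma sq13_unit_eps : sq1 unit_eps = (sqrt2 + 1) ^+ 2 /\ sq3 unit_eps = (sqrt2 - 1) ^+ 2.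
Proof.
rewrite /sq1 /sq3 (proj1 unit_epsE) (proj2 unit_epsE) normrN.
split; apply: real_normK; first by apply: realD; rewrite ?sqrt2_real.
by apply: realB; rewrite ?sqrt2_real.
Qed.

Lemma sq13_unit_eps_inv :
  sq1 unit_eps_inv = (sqrt2 - 1) ^+ 2 /\ sq3 unit_eps_inv = (sqrt2 + 1) ^+ 2.
Proof.
rewrite /sq1 /sq3 (proj1 unit_eps_invE) (proj2 unit_eps_invE) normrN.
split; apply: real_normK; first by apply: realB; rewrite ?sqrt2_real.
by apply: realD; rewrite ?sqrt2_real.
Qed.

Lemma min_sqsum_generator_shortest I p : generates I p ->
  (forall f, generates I f -> sqsum p <= sqsum f) ->
  forall q, I (evalZ q theta) -> evalZ q theta != 0 -> sqsum p <= sqsum q.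
Proof.
move=> Gp p_min q Iq q0; have [d ed] := (Gp _).1 Iq.
rewrite (sqsum_evalZ_eq q (p * d)) ?evalZM //.
have d0 : evalZ d theta != 0 by apply: contra_neq q0 => d0; rewrite ed d0 mulr0.
have /natrP [n fd] := fnorm_nat d.
have n0 : (0 < n)%nat by rewrite -(ltr0n algC) -fd fnorm_gt0.
have [n1|n_ne1] := eqVneq n 1%nat.
  by apply/p_min/(generates_mul_unit _ _ _ (norm_cofactor d) Gp); rewrite norm_cofactorE fd n1.
have le_eps := p_min _ (generates_mul_unit _ _ _ _ Gp unit_epsK).
have le_eps_inv := p_min _ (generates_mul_unit _ _ _ _ Gp (etrans (mulrC _ _) unit_epsK)).
move: le_eps le_eps_inv; rewrite /sqsum !sq1M !sq3M.
case: sq13_unit_eps => -> ->; case: sq13_unit_eps_inv => -> -> le_eps le_eps_inv.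
apply: (unit_stable_weights_le _ _ _ _ _ sqrt2) => //; rewrite ?sq1_ge0 ?sq3_ge0 ?sqrt2_sq //.
by rewrite -/(fnorm d) fd ler_nat; case: n n0 n_ne1 {fd} => [|[|]].
Qed.

Theorem theorem8 (I : algC -> Prop) :
  is_ideal I -> (exists x, I x /\ x != 0) ->
  exists p : {poly int},
    (forall x, I x <-> exists q : {poly int}, x = evalZ p theta * evalZ q theta) /\
    (forall (gamma : algC) (q : {poly int}),
        I gamma -> gamma != 0 -> gamma = evalZ q theta ->
        canon_norm p <= canon_norm q).
Proof.
move=> idealI nzI; have [b Gb] := ideal_principal I idealI nzI.
have [p Gp p_min] := ex_minimizer _ _ (generates I) sqsum sqsum_nat (ex_intro _ b Gb).
exists p; split=> // gamma q Iq q0 eq_q; subst gamma.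
by apply: canon_norm_le; apply: (min_sqsum_generator_shortest I).
Qed.
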